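(* Let $d\ge1$, $L\ge1$, and let $\ell:[0,1]^2\to\mathbb{R}_{\ge0}$ be continuous with $\ell(y,y)=0$ for all $y\in[0,1]$. For every sequence $(x_t)_{t\ge1}\subseteq[-1,1]^d$ and every $f^\star\in\mathcal{H}_L$ with $y_t=f^\star(x_t)$, the (deterministic) envelope strategy satisfies $\lim_{t\to\infty}\ell(\hat y_t,y_t)=0$.
   Context: $\mathcal{H}_L$ is the set of functions $h:[-1,1]^d\to[0,1]$ with $|h(x)-h(x')|\le L\|x-x'\|_\infty$. Envelope strategy: at round $t$, with past data $(x_s,y_s)_{s<t}$, define $\underline h_t(x)=\max\{0,\max_{s<t}(y_s-L\|x-x_s\|_\infty)\}$ and $\overline h_t(x)=\min\{1,\min_{s<t}(y_s+L\|x-x_s\|_\infty)\}$ (with $\max_{\emptyset}=-\infty$, $\min_\emptyset=+\infty$), and predict $\hat y_t=\frac12(\underline h_t(x_t)+\overline h_t(x_t))$. *)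

From HB Require Import structures.
From mathcomp Require Import all_boot all_order all_algebra.
From mathcomp Require Import all_classical all_reals topology normedtype sequences.
Set Implicit Arguments. Unset Strict Implicit. Unset Printing Implicit Defensive.
Import Order.TTheory GRing.Theory Num.Theory.
Import numFieldNormedType.Exports.
Local Open Scope ring_scope.
Local Open Scope classical_set_scope.

Section Defs.
Variables (R : realType) (d : nat).

Definition pt := 'I_d -> R.

(* sup-norm distance ||x - x'||_oo (as d >= 1, max with 0 is harmless) *)
Definition supdist (x x' : pt) : R := \big[Num.max/0]_(i < d) `|x i - x' i|.

Definition in_cube (x : pt) : Prop := forall i, -1 <= x i <= 1.

Definition in_HL (L : R) (h : pt -> R) : Prop :=
  (forall x, in_cube x -> 0 <= h x <= 1) /\
  (forall x x', in_cube x -> in_cube x' -> `|h x - h x'| <= L * supdist x x').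

(* Rounds are indexed from 0; the past at round t is s < t. *)
Definition env_lo (L : R) (xs : nat -> pt) (ys : nat -> R) (t : nat) (x : pt) : R :=
  \big[Num.max/0]_(s < t) (ys s - L * supdist x (xs s)).

Definition env_hi (L : R) (xs : nat -> pt) (ys : nat -> R) (t : nat) (x : pt) : R :=
  \big[Num.min/1]_(s < t) (ys s + L * supdist x (xs s)).

Definition env_pred (L : R) (xs : nat -> pt) (ys : nat -> R) (t : nat) : R :=
  (env_lo L xs ys t (xs t) + env_hi L xs ys t (xs t)) / 2.

End Defs.

From HB Require Import structures.
From mathcomp Require Import all_boot all_order all_algebra.
From mathcomp Require Import all_classical all_reals topology normedtype sequences.
From mathcomp Require Import ring lra.
Set Implicit Arguments. Unset Strict Implicit. Unset Printing Implicit Defensive.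
Import Order.TTheory GRing.Theory Num.Theory.
Import numFieldNormedType.Exports.
Local Open Scope ring_scope.
Local Open Scope classical_set_scope.

(* Since the sequence lives in a compact cube, all but finitely many rounds t have
   an earlier point x_s within eta of x_t (a grid of mesh eta has finitely many
   cells, and two rounds in the same cell are eta-close).  At such a round both
   envelopes are squeezed around f*(x_t): hi - lo <= 2 L ||x_t - x_s||, so the
   midpoint prediction is within L eta of y_t.  Uniform continuity of ell near the
   diagonal of the compact square then makes the loss small. *)

Lemma finite_set_injfin (T : Type) (U : finType) (f : T -> U) (A : set T) :
  {in A &, injective f} -> finite_set A.
Proof. by move=> /inj_card_eq fA; rewrite -(eq_finite_set fA). Qed.

Lemma finite_set_nat_near_oo (A : set nat) :
  finite_set A -> \forall n \near \oo, ~ A n.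
Proof.
move=> /finite_seqP[s ->]; exists (\max_(m <- s) m).+1 => // n /= sn ns.
by move: sn; rewrite leqNgt ltnS (leq_bigmax_seq _ ns).
Qed.

Lemma near_oo_close_to_earlier (T : Type) (U : finType) (c : T -> U)
    (close : T -> T -> Prop) (u : nat -> T) :
  (forall s t, c (u s) = c (u t) -> close (u t) (u s)) ->
  \forall t \near \oo, exists2 s, (s < t)%N & close (u t) (u s).
Proof.
move=> c_close.
pose fresh := [set t | forall s, (s < t)%N -> ~ close (u t) (u s)].
have fresh_inj : {in fresh &, injective (c \o u)}.
  move=> s t /set_mem fresh_s /set_mem fresh_t /= cst.
  case: (ltngtP s t) => // [st|ts]; first by case: (fresh_t s st); apply: c_close.
  by case: (fresh_s t ts); apply: c_close.
apply: filterS (finite_set_nat_near_oo (finite_set_injfin fresh_inj)).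
by move=> t /existsNP[s /not_implyP[st /contrapT]]; exists s.
Qed.

Section cube_grid.
Variables (R : realType) (d : nat) (eta : R).
Hypothesis eta_gt0 : 0 < eta.

Definition grid_index (z : R) : nat := Num.truncn ((z + 1) / eta).

Definition grid_cell (x : pt R d) : {ffun 'I_d -> 'I_(grid_index 1).+1} :=
  [ffun i => inord (grid_index (x i))].

Lemma grid_index_le1 z : z <= 1 -> (grid_index z <= grid_index 1)%N.
Proof. by move=> z1; apply: le_truncn; rewrite ler_pM2r ?invr_gt0 // lerD2r. Qed.

Lemma grid_index_close z z' : -1 <= z -> -1 <= z' ->
  grid_index z = grid_index z' -> `|z - z'| < eta.
Proof.
move=> z_ge z'_ge eq_zz'.
have itv w : -1 <= w -> (grid_index w)%:R <= (w + 1) / eta < (grid_index w).+1%:R.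
  by move=> w_ge; apply/truncn_itv/divr_ge0; [rewrite -lerBlDr sub0r|exact: ltW].
move: (itv _ z_ge) (itv _ z'_ge); rewrite eq_zz' -natr1.
rewrite !ler_pdivlMr ?ltr_pdivrMr // => /andP[lo hi] /andP[lo' hi'].
apply/ltr_normlP; split; nra.
Qed.

Lemma grid_cell_supdist x x' : in_cube x -> in_cube x' ->
  grid_cell x = grid_cell x' -> supdist x x' < eta.
Proof.
move=> cube_x cube_x' /ffunP eq_cell; apply: bigmax_lt => // i _.
have [/andP[x_ge x_le] /andP[x'_ge x'_le]] := (cube_x i, cube_x' i).
apply: grid_index_close => //.
move: (eq_cell i) => /(congr1 val); rewrite !ffunE /=.
by rewrite !inordK // ltnS grid_index_le1.
Qed.

End cube_grid.

Section near_diagonal.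
Variables (R : realType) (K : set R) (g : R -> R -> R).
Hypotheses (K_compact : compact K)
  (g_cont : {within [set p : R * R | K p.1 /\ K p.2],
              continuous (fun p : R * R => g p.1 p.2)})
  (g_diag : forall y, K y -> g y y = 0).

Lemma near_diagonal_ball (e y : R) : 0 < e -> K y -> exists2 r : R, 0 < r &
  forall a b, K a -> K b -> `|a - y| < r -> `|b - y| < r -> `|g a b| < e.
Proof.
move=> e_gt0 Ky.
have /(subspace_continuousP _ _) /(_ (y, y)) := g_cont.
move=> /(_ (conj Ky Ky)) /cvgrPdist_lt /(_ e e_gt0).
rewrite /from_subspace /= g_diag // /within => /nbhs_ballP[r /= r_gt0 gr].
exists r => // a b Ka Kb ay_lt by_lt.
rewrite -[ `|_| ]normrN -sub0r; apply: (gr (a, b)) => //.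
by split; rewrite /= -ball_normE /ball /= distrC.
Qed.

Lemma near_diagonal_small (e : R) : 0 < e -> exists2 del : R, 0 < del &
  forall a b, K a -> K b -> `|a - b| < del -> `|g a b| < e.
Proof.
move=> e_gt0.
pose P (i y : R) := forall a b, K a -> K b -> `|a - y| < i -> `|b - y| < i ->
  `|g a b| < e.
have : \forall i \near 0^'+, K `<=` P i.
  apply: (proj1 (compact_near_coveringP K) K_compact) => y Ky.
  have [r r_gt0 gr] := near_diagonal_ball e_gt0 Ky.
  have r2_gt0 : 0 < r / 2 by rewrite divr_gt0.
  exists ([set y' | `|y - y'| < r / 2], [set i | 0 < i < r / 2]).
    split; first by apply/nbhs_ballP; exists (r / 2) => // z; rewrite -ball_normE.
    near=> i; apply/andP; split; near: i;
      [exact: nbhs_right_gt | exact: nbhs_right_lt].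
  move=> [y' i] /= [yy' /andP[i_gt0 ir]].
  have near_y z : `|z - y'| < i -> `|z - y| < r.
    move=> zy'; rewrite (le_lt_trans (ler_distD y' z y)) // (distrC y').
    by rewrite [r in _ < r]splitr ltrD // (lt_trans zy').
  by move=> a b Ka Kb /near_y ay /near_y yb; apply: gr.
move=> /(filterI (nbhs_right_gt 0)) /filter_ex[del [/= del_gt0 KP]].
exists del => // a b Ka Kb ab.
by apply: (KP b Kb a b Ka Kb ab); rewrite subrr normr0.
Unshelve. all: by end_near.
Qed.

End near_diagonal.

Section envelope.
Variables (R : realType) (d : nat) (L : R) (xs : nat -> pt R d).

Section arbitrary_labels.
Variables (ys : nat -> R) (t : nat) (x : pt R d).

Lemma env_lo_ge0 : 0 <= env_lo L xs ys t x.
Proof. exact: bigmax_ge_id. Qed.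

Lemma env_hi_le1 : env_hi L xs ys t x <= 1.
Proof. exact: bigmin_le_id. Qed.

Lemma env_hi_sub_lo s : (s < t)%N ->
  env_hi L xs ys t x - env_lo L xs ys t x <= 2 * (L * supdist x (xs s)).
Proof.
move=> st.
have := bigmin_le 1 (Ordinal st) (fun s : 'I_t => ys s + L * supdist x (xs s)).
have := le_bigmax 0 (fun s : 'I_t => ys s - L * supdist x (xs s)) (Ordinal st).
rewrite /env_lo /env_hi /=; lra.
Qed.

End arbitrary_labels.

Section lipschitz_labels.
Variables (f : pt R d -> R) (t : nat) (x : pt R d).
Hypotheses (f_HL : in_HL L f) (xs_cube : forall s, in_cube (xs s))
  (x_cube : in_cube x).

Lemma env_lo_le : env_lo L xs (fun s => f (xs s)) t x <= f x.
Proof.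
have [f01 f_lip] := f_HL.
apply: bigmax_le => [|s _]; first by case/andP: (f01 x x_cube).
have /ler_normlP[] := f_lip _ _ x_cube (xs_cube s); lra.
Qed.

Lemma le_env_hi : f x <= env_hi L xs (fun s => f (xs s)) t x.
Proof.
have [f01 f_lip] := f_HL.
apply: le_bigmin => [|s _]; first by case/andP: (f01 x x_cube).
have /ler_normlP[] := f_lip _ _ x_cube (xs_cube s); lra.
Qed.

End lipschitz_labels.

Section envelope_prediction.
Variables (f : pt R d -> R) (t : nat).
Hypotheses (f_HL : in_HL L f) (xs_cube : forall s, in_cube (xs s)).

Lemma env_pred_itv : 0 <= env_pred L xs (fun s => f (xs s)) t <= 1.
Proof.
have := env_lo_ge0 (fun s => f (xs s)) t (xs t).
have := env_hi_le1 (fun s => f (xs s)) t (xs t).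
have := env_lo_le t f_HL xs_cube (xs_cube t).
have := le_env_hi t f_HL xs_cube (xs_cube t).
rewrite /env_pred => *; apply/andP; split; lra.
Qed.

Lemma env_pred_dist s : (s < t)%N ->
  `|env_pred L xs (fun s => f (xs s)) t - f (xs t)| <=
    L * supdist (xs t) (xs s).
Proof.
move=> st; have := env_hi_sub_lo (fun s => f (xs s)) (xs t) st.
have := env_lo_le t f_HL xs_cube (xs_cube t).
have := le_env_hi t f_HL xs_cube (xs_cube t).
rewrite /env_pred => *; apply/ler_normlP; split; lra.
Qed.

End envelope_prediction.
End envelope.

Lemma near_oo_supdist_earlier (R : realType) d (xs : nat -> pt R d) (eta : R) :
  0 < eta -> (forall t, in_cube (xs t)) ->
  \forall t \near \oo, exists2 s, (s < t)%N & supdist (xs t) (xs s) < eta.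
Proof.
move=> eta_gt0 xs_cube.
apply: (@near_oo_close_to_earlier _ _ (grid_cell eta)
  (fun x y => supdist x y < eta)).
by move=> s t /esym; apply: grid_cell_supdist.
Qed.

Theorem corollary1p4 (R : realType) (d : nat) (L : R) (ell : R -> R -> R)
  (xs : nat -> pt R d) (fstar : pt R d -> R) :
  (1 <= d)%N -> 1 <= L ->
  {within [set p : R * R | (0 <= p.1 <= 1) /\ (0 <= p.2 <= 1)],
     continuous (fun p : R * R => ell p.1 p.2)} ->
  (forall a b, 0 <= a <= 1 -> 0 <= b <= 1 -> 0 <= ell a b) ->
  (forall y, 0 <= y <= 1 -> ell y y = 0) ->
  (forall t, in_cube (xs t)) ->
  in_HL L fstar ->
  (fun t => ell (env_pred L xs (fun s => fstar (xs s)) t) (fstar (xs t)))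
    @ \oo --> (0 : R).
Proof.
move=> _ L_ge1 ell_cont _ ell_diag xs_cube f_HL.
have L_gt0 : 0 < L by apply: lt_le_trans L_ge1.
have unit_compact : compact [set y : R | 0 <= y <= 1].
  by rewrite -set_itvcc; exact: segment_compact.
apply/cvgrPdist_lt => e e_gt0.
have [del del_gt0 ell_small] :=
  near_diagonal_small unit_compact ell_cont ell_diag e_gt0.
apply: filterS (near_oo_supdist_earlier (divr_gt0 del_gt0 L_gt0) xs_cube).
move=> t [s st close_ts]; rewrite sub0r normrN.
apply: ell_small; [exact: env_pred_itv | exact: f_HL.1 |].
apply: le_lt_trans (env_pred_dist f_HL xs_cube st) _.
by rewrite mulrC -ltr_pdivlMr.
Qed.
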